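(* Let $\mathbf{B}\in\dot{\mathbb{P}}(\mathbb{L}(\mathbf{C}))$. Then $\mathbf{B}$ is singular for $\mathcal{D}(\mathbf{C},\Omega)$ if and only if there exists $\omega^*\in\Omega$ such that in every sufficient cause representation $(\mathbf{A},\mathfrak{B})$ for $\mathcal{D}(\mathbf{C},\Omega)$: (i) for every $\mathbf{B}^*\in\dot{\mathbb{P}}(\mathbb{L}(\mathbf{C}))$ with $|\mathbf{B}^*|=|\mathbf{C}|$ and $\mathbf{B}\subseteq\mathbf{B}^*$ there exists $\mathbf{B}_i\in\mathfrak{B}$ with $\mathbf{B}_i\subseteq\mathbf{B}^*$ and $A_i(\omega^* )=1$; and (ii) for every $\mathbf{B}_i\in\mathfrak{B}$ with $\mathbf{B}\not\subseteq\mathbf{B}_i$, $A_i(\omega^* )=0$.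
   Context: Events are binary random variables on a population $\Omega$; $\overline{X}=1-X$; $\mathbb{L}(\mathbf{C})=\mathbf{C}\cup\{\overline{X}:X\in\mathbf{C}\}$; $\dot{\mathbb{P}}(\mathbb{L}(\mathbf{C}))$ is the set of subsets of $\mathbb{L}(\mathbf{C})$ not containing both $X$ and $\overline{X}$; $(L)_{\mathbf{c}}$ is the value of literal $L$ under assignment $\mathbf{c}$; $\bigwedge(\mathbf{B})=\min_{L\in\mathbf{B}}L$. Potential outcomes $\mathcal{D}(\mathbf{C},\Omega)$: $D_{\mathbf{c}}(\omega)\in\{0,1\}$. $\mathbf{B}$ is a sufficient cause for $D$ relative to $\mathbf{C}$ for $\omega^*$ if some $\mathbf{c}^*$ has $(\bigwedge(\mathbf{B}))_{\mathbf{c}^*}=1$ and $D_{\mathbf{c}}(\omega^* )=1$ whenever $(\bigwedge(\mathbf{B}))_{\mathbf{c}}=1$; minimal if no proper subset is such; singular for $\omega^*$ if it is a minimal sufficient cause for $\omega^*$ and no other $\mathbf{B}'\in\dot{\mathbb{P}}(\mathbb{L}(\mathbf{C}))$ is a minimal sufficient cause for $\omega^*$; singular for $\mathcal{D}(\mathbf{C},\Omega)$ if singular for some $\omega^*\in\Omega$. A sufficient cause representation $(\mathbf{A},\mathfrak{B})$ for $\mathcal{D}(\mathbf{C},\Omega)$: binary random variables $\mathbf{A}=\langle A_1,\dots,A_p\rangle$ on $\Omega$ unaffected by interventions on $\mathbf{C}$, paired with $\mathfrak{B}=\langle\mathbf{B}_1,\dots,\mathbf{B}_p\rangle$, $\mathbf{B}_i\in\dot{\mathbb{P}}(\mathbb{L}(\mathbf{C}))$,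 such that $D_{\mathbf{c}}(\omega)=1$ iff some $j$ has $A_j(\omega)=1$ and $(\bigwedge(\mathbf{B}_j))_{\mathbf{c}}=1$. *)

From mathcomp Require Import all_boot.
Set Implicit Arguments. Unset Strict Implicit. Unset Printing Implicit Defensive.

(* C = <X_0,...,X_{n-1}> : n binary events, indexed by 'I_n.
   A literal of L(C) is a pair (i, b) : 'I_n * bool;
   (i, true) stands for X_i and (i, false) for its complement 1 - X_i. *)
Definition assign (n : nat) := {ffun 'I_n -> bool}.
Definition literal (n : nat) := ('I_n * bool)%type.

Definition lit_val n (L : literal n) (c : assign n) : bool := c L.1 == L.2.

(* B in P-dot(L(C)) : a set of literals not containing both X and its complement *)
Definition consistent n (B : {set literal n}) : bool :=
  [forall i : 'I_n, ~~ (((i, true) \in B) && ((i, false) \in B))].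

Definition conj_val n (B : {set literal n}) (c : assign n) : bool :=
  [forall L in B, lit_val L c].

(* Potential outcomes D(C, Omega): D c w = D_c(w). *)
Definition outcomes (n : nat) (Omega : Type) := assign n -> Omega -> bool.

Definition sufficient_cause n Omega (D : outcomes n Omega) (B : {set literal n}) (w : Omega) : Prop :=
  (exists c, conj_val B c) /\ (forall c, conj_val B c -> D c w).

Definition minimal_sufficient_cause n Omega (D : outcomes n Omega) (B : {set literal n}) (w : Omega) : Prop :=
  sufficient_cause D B w /\
  (forall B' : {set literal n}, B' \proper B -> ~ sufficient_cause D B' w).

Definition singular_for n Omega (D : outcomes n Omega) (B : {set literal n}) (w : Omega) : Prop :=
  minimal_sufficient_cause D B w /\
  (forall B' : {set literal n}, consistent B' -> B' <> B -> ~ minimal_sufficient_cause D B' w).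

Definition singular n Omega (D : outcomes n Omega) (B : {set literal n}) : Prop :=
  exists w : Omega, singular_for D B w.

(* (A, frak B) with p components is a sufficient cause representation for D.
   A_j : Omega -> bool does not depend on the assignment c (unaffected by
   interventions on C). *)
Definition sc_representation n Omega (D : outcomes n Omega) (p : nat)
    (A : 'I_p -> Omega -> bool) (Bs : 'I_p -> {set literal n}) : Prop :=
  (forall j, consistent (Bs j)) /\
  (forall c w, D c w = [exists j, A j w && conj_val (Bs j) c]).

From mathcomp Require Import all_boot.
Set Implicit Arguments. Unset Strict Implicit. Unset Printing Implicit Defensive.

(* Both sides of the theorem are characterised by one and the same property of
   the individual omega: D(., omega) coincides with the conjunction of B, i.e.
   D_c(omega) = (/\ B)_c for every assignment c ("D is determined by B at omega").

   From this we show that B is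
   singular for omega iff D is determined by B at omega (every sufficient cause
   lies above a minimal one, and B is below every sufficient cause).  Then we
   show that conditions (i) and (ii) hold in every sufficient cause
   representation iff D is determined by B at omega; the "only if" direction
   uses the atomic representation with one component per assignment. *)

Section Literals.
Variable n : nat.
Implicit Types (B S : {set literal n}) (c : assign n).

Definition lits c : {set literal n} := [set (i, c i) | i : 'I_n].

Lemma mem_lits c i b : ((i, b) \in lits c) = (c i == b).
Proof. by apply/imsetP/eqP => [[j _ [-> ->]] // | <-]; exists i. Qed.

Lemma sub_lits B c : (B \subset lits c) = conj_val B c.
Proof.
apply/subsetP/forallP => [sub [i b] | sat [i b] inB].
  by apply/implyP => /sub; rewrite mem_lits.
by rewrite mem_lits; move: (sat (i, b)); rewrite inB.
Qed.

Lemma conj_lits c' c : conj_val (lits c') c = (c' == c).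
Proof.
rewrite -sub_lits; apply/subsetP/eqP => [sub | -> //].
by apply/ffunP => i; apply/eqP; rewrite eq_sym -mem_lits sub ?mem_lits.
Qed.

Lemma lits_consistent c : consistent (lits c).
Proof. by apply/forallP => i; rewrite !mem_lits; case: (c i). Qed.

Lemma card_lits c : #|lits c| = n.
Proof. by rewrite card_imset ?card_ord // => i j []. Qed.

Lemma sat_consistent B c : conj_val B c -> consistent B.
Proof.
move=> /forallP sat; apply/forallP => i; apply/negP => /andP [iT iF].
by move: (sat (i, true)) (sat (i, false)); rewrite iT iF /lit_val /=; case: (c i).
Qed.

Definition default_assign S : assign n := [ffun j => (j, true) \in S].

(* It satisfies S when S is consistent: every negative literal (j, false)
   of S has (j, true) outside S. *)
Lemma default_sat S : consistent S -> conj_val S (default_assign S).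
Proof.
move=> /forallP cons; apply/forallP => [[j v]]; apply/implyP => inS.
rewrite /lit_val ffunE /=; move: (cons j).
by case: v inS => -> //=; rewrite andbT => /negbTE ->.
Qed.

Lemma sat_exists S : consistent S -> exists c, conj_val S c.
Proof. by move=> cons; exists (default_assign S); apply: default_sat. Qed.

(* A consistent conjunction entails another one only if it contains it: a
   literal (k, b) missing from S can be falsified while keeping S true. *)
Lemma entails_sub B S :
  consistent S -> (forall c, conj_val S c -> conj_val B c) -> B \subset S.
Proof.
move=> cons ent; apply/subsetP => [[k b]] kb; apply/negPn/negP => notS.
pose c := [ffun j => if j == k then ~~ b else default_assign S j].
have satS : conj_val S c.
  apply/forallP => [[j v]]; apply/implyP => inS; rewrite /lit_val ffunE /=.
  have [ejk | _] := eqVneq j k; last first.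
    by move: (default_sat cons) => /forallP /(_ (j, v)); rewrite inS.
  by rewrite ejk in inS *; move: notS inS; case: (b); case: v => //= /negbTE ->.
by move: (ent c satS) => /forallP /(_ (k, b)); rewrite kb /lit_val ffunE eqxx; case: (b).
Qed.

Lemma complete_lits S : consistent S -> #|S| = n -> exists c, S = lits c.
Proof.
move=> /sat_exists [c satS] cardS; exists c; apply/eqP.
by rewrite eqEcard sub_lits satS cardS card_lits leqnn.
Qed.

End Literals.

Section Singular.
Variables (n : nat) (Omega : Type) (D : outcomes n Omega).
Implicit Types (B S : {set literal n}) (w : Omega).

Definition determined_by B w : Prop := forall c, D c w = conj_val B c.

Definition sufficientb S w : bool :=
  [exists c, conj_val S c] && [forall c, conj_val S c ==> D c w].

Lemma sufficientP S w : reflect (sufficient_cause D S w) (sufficientb S w).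
Proof.
apply: (iffP andP) => [[/existsP sat /forallP suff] | [sat suff]].
  by split => // c Sc; move: (suff c); rewrite Sc.
by split; [apply/existsP | apply/forallP => c; apply/implyP; apply: suff].
Qed.

(* Every sufficient cause contains a minimal one (take one of least size). *)
Lemma minimal_below S w :
  sufficient_cause D S w ->
  exists2 M : {set literal n}, M \subset S & minimal_sufficient_cause D M w.
Proof.
move=> /sufficientP suffS.
have P_S : (S \subset S) && sufficientb S w by rewrite subxx.
case: (@arg_minnP _ S (fun M => (M \subset S) && sufficientb M w) (fun M => #|M|) P_S)
  => M /andP [MS /sufficientP suffM] least.
exists M => //; split => // M' ltM' /sufficientP suffM'.
have := least M'; rewrite suffM' (subset_trans (proper_sub ltM') MS) => /(_ isT).
by rewrite leqNgt proper_card.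
Qed.

Lemma determined_sub B S w :
  determined_by B w -> sufficient_cause D S w -> B \subset S.
Proof.
move=> det [[c Sc] suff]; apply: entails_sub (sat_consistent Sc) _.
by move=> c' Sc'; rewrite -det suff.
Qed.

Lemma singular_for_determined B w : singular_for D B w -> determined_by B w.
Proof.
move=> [[[_ suffB] _] unique] c; apply/idP/idP; last exact: suffB.
move=> Dc; have suff_c : sufficient_cause D (lits c) w.
  by split=> [|c']; [exists c; rewrite conj_lits | rewrite conj_lits => /eqP <-].
have [M Mc minM] := minimal_below suff_c.
have consM : consistent M by case: minM => [[[c0 /sat_consistent]]].
have [eqMB | neq] := eqVneq M B; first by rewrite -sub_lits -eqMB.
by case: (unique M consM (elimN eqP neq)).
Qed.

Lemma determined_singular_for B w :
  consistent B -> determined_by B w -> singular_for D B w.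
Proof.
move=> consB det.
have suffB : sufficient_cause D B w by split=> [|c]; [exact: sat_exists | rewrite det].
split.
  by split=> // B' ltB' /(determined_sub det); apply/negP; exact: proper_subn.
move=> B' _ neq [suffB' minB']; apply: (minB' B) => //.
by rewrite properEneq (determined_sub det suffB') andbT; apply/eqP => /esym.
Qed.

Lemma singular_forE B w :
  consistent B -> singular_for D B w <-> determined_by B w.
Proof.
by move=> consB; split; [exact: singular_for_determined | exact: determined_singular_for].
Qed.

End Singular.

Section Representations.
Variables (n : nat) (Omega : Type) (D : outcomes n Omega).
Implicit Types (B : {set literal n}) (w : Omega).

Definition representation_condition B w : Prop :=
  forall (p : nat) (A : 'I_p -> Omega -> bool) (Bs : 'I_p -> {set literal n}),
    sc_representation D A Bs ->
    (forall Bstar : {set literal n},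
        consistent Bstar -> #|Bstar| = n -> B \subset Bstar ->
        exists i : 'I_p, Bs i \subset Bstar /\ A i w = true) /\
    (forall i : 'I_p, ~~ (B \subset Bs i) -> A i w = false).

Lemma atomic_representation :
  sc_representation D (fun (j : 'I_#|{: assign n}|) w => D (enum_val j) w)
    (fun j => lits (enum_val j)).
Proof.
split => [j | c w]; first exact: lits_consistent.
apply/idP/existsP => [Dc | [j /andP [Dj]]]; last by rewrite conj_lits => /eqP <-.
by exists (enum_rank c); rewrite enum_rankK conj_lits eqxx andbT.
Qed.

Lemma determined_representation B w :
  determined_by D B w -> representation_condition B w.
Proof.
move=> det p A Bs [cons rep]; split.
  move=> Bstar consS cardS; have [c ->] := complete_lits consS cardS => BS.
  have : D c w by rewrite det -sub_lits.
  by rewrite rep => /existsP [i /andP [Ai Bi]]; exists i; rewrite sub_lits.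
move=> i notB; apply/negbTE/negP => Ai; apply: (negP notB).
apply: entails_sub (cons i) _ => c Bic; rewrite -det rep.
by apply/existsP; exists i; rewrite Ai.
Qed.

Lemma representation_determined B w :
  representation_condition B w -> determined_by D B w.
Proof.
move=> cond c; have [covers outside] := cond _ _ _ atomic_representation.
apply/idP/idP => [Dc | Bc].
  rewrite -sub_lits -(enum_rankK c); apply/negPn/negP => notB.
  by have := outside _ notB; rewrite enum_rankK Dc.
have Bc' : B \subset lits c by rewrite sub_lits.
have [i [sub Di]] := covers (lits c) (lits_consistent c) (card_lits c) Bc'.
by move: sub Di; rewrite sub_lits conj_lits => /eqP <-.
Qed.

End Representations.

Theorem mainTheorem14 (n : nat) (Omega : Type) (D : outcomes n Omega)
    (B : {set literal n}) (HB : consistent B) :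
  singular D B <->
  exists w : Omega,
    forall (p : nat) (A : 'I_p -> Omega -> bool) (Bs : 'I_p -> {set literal n}),
      sc_representation D A Bs ->
      (forall Bstar : {set literal n},
          consistent Bstar -> #|Bstar| = n -> B \subset Bstar ->
          exists i : 'I_p, Bs i \subset Bstar /\ A i w = true) /\
      (forall i : 'I_p, ~~ (B \subset Bs i) -> A i w = false).
Proof.
split => [[w singw] | [w condw]]; exists w.
  by apply: determined_representation; apply/(singular_forE _ _ HB).
by apply/(singular_forE _ _ HB); apply: representation_determined.
Qed.
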